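(* Let $K$ be a field and $X$ a finite connected poset. The kernel $N=\{\varphi\in\mathrm{LAut}(I(X,K)): \widetilde\varphi=\mathrm{id}\}$ of the homomorphism $\varphi\mapsto\widetilde\varphi$ coincides with $\mathrm{Inn}_1(I(X,K))$, the group of conjugations $f\mapsto\beta f\beta^{-1}$ by elements $\beta\in I(X,K)$ with $\beta(x,x)=1$ for all $x\in X$.
   Context: $I(X,K)$ is the incidence algebra: functions $f:X\times X\to K$ with $f(x,y)=0$ unless $x\le y$, product $(fg)(x,y)=\sum_{x\le t\le y}f(x,t)g(t,y)$; $e_{xy}$ ($x\le y$) is the basis element equal to $1$ at $(x,y)$ and $0$ elsewhere. $\mathrm{LAut}(I(X,K))$ is the group of bijective linear maps preserving $[f,g]=fg-gf$. Let $l(\lfloor x,y\rfloor)$ be the maximum length of a chain in $\{z:x\le z\le y\}$, $L_i=\mathrm{span}_K\{e_{xy}: l(\lfloor x,y\rfloor)=i\}$ ($i\ge0$). For $\varphi\in\mathrm{LAut}(I(X,K))$, $\widetilde\varphi$ is the linear map sending $e_{xy}\in L_i$ to the $L_i$-component of $\varphi(e_{xy})$ in $I(X,K)=\bigoplus_iL_i$. Connected means any two elements are joined by a sequence in which consecutive elements are in a covering relation. *)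

From HB Require Import structures.
From mathcomp Require Import all_boot all_order all_algebra.
Set Implicit Arguments. Unset Strict Implicit. Unset Printing Implicit Defensive.
Import Order.POrderTheory GRing.Theory.

Local Open Scope order_scope.

Notation IFun X K := {ffun X * X -> K} (only parsing).

Section Incidence.
Variables (d : Order.disp_t) (X : finPOrderType d) (K : fieldType).

Definition leI (a b : X) : bool := (a <= b)%O.


Definition incid (f : IFun X K) : Prop :=
  forall x y : X, ~~ (x <= y) -> f (x, y) = 0%R.

Definition conv (f g : IFun X K) : IFun X K :=
  [ffun p : X * X => (\sum_(t : X | leI p.1 t && leI t p.2)
                         f (p.1, t) * g (t, p.2))%R].

Definition lie (f g : IFun X K) : IFun X K := (conv f g - conv g f)%R.

Definition idI : IFun X K := [ffun p : X * X => if p.1 == p.2 then 1%R else 0%R].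

Definition eI (u v : X) : IFun X K := [ffun p : X * X => if p == (u, v) then 1%R else 0%R].

(* Lie automorphisms of I(X,K): bijective linear maps of I(X,K)
   preserving the commutator; only the values on I(X,K) matter. *)
Definition LAut (phi : IFun X K -> IFun X K) : Prop :=
  [/\ (forall f, incid f -> incid (phi f)),
      (forall (a : K) f g, incid f -> incid g ->
          phi [ffun p => (a * f p + g p)%R] = [ffun p => (a * phi f p + phi g p)%R]),
      (forall f g, incid f -> incid g -> phi f = phi g -> f = g),
      (forall g, incid g -> exists2 f, incid f & phi f = g) &
      (forall f g, incid f -> incid g -> phi (lie f g) = lie (phi f) (phi g))].

(* l(floor x,y ceil): maximum length of a chain in [x,y]; a maximal chain
   contains x and y, so it is the maximal n such that there is a strictly
   increasing path x < x_1 < ... < x_n = y (n <= #|X| always). *)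
Definition ilen (x y : X) : nat :=
  \max_(n < #|X|.+1 | [exists t : n.-tuple X,
           path (fun a b : X => a < b) x t && (last x t == y)]) n.

Definition compL (i : nat) (g : IFun X K) : IFun X K :=
  [ffun p : X * X => if leI p.1 p.2 && (ilen p.1 p.2 == i)%N then g p else 0%R].

(* phi~ : linear map sending e_{xy} in L_i to the L_i-component of phi(e_{xy}) *)
Definition tilde (phi : IFun X K -> IFun X K) (f : IFun X K) : IFun X K :=
  [ffun q : X * X => (\sum_(p : X * X | leI p.1 p.2)
       f p * compL (ilen p.1 p.2) (phi (eI p.1 p.2)) q)%R].

Definition Inn1 (phi : IFun X K -> IFun X K) : Prop :=
  exists beta binv : IFun X K,
    [/\ incid beta, incid binv, (forall x : X, beta (x, x) = 1%R),
        conv beta binv = idI /\ conv binv beta = idI &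
        (forall f, incid f -> phi f = conv (conv beta f) binv)].

Definition covers (a b : X) : bool :=
  (a < b) && [forall z : X, ~~ ((a < z) && (z < b))].

Definition connected_poset : Prop :=
  forall x y : X, exists s : seq X,
    path (fun a b : X => covers a b || covers b a) x s /\ last x s = y.

End Incidence.

From HB Require Import structures.
From mathcomp Require Import all_boot all_order all_algebra.
Set Implicit Arguments. Unset Strict Implicit. Unset Printing Implicit Defensive.
Import Order.POrderTheory GRing.Theory.
Local Open Scope ring_scope.

(* Let phi be a Lie automorphism with trivial tilde and E z := phi e_zz.
   Triviality of tilde says that E z has diagonal e_zz and that phi e_uv has
   (u, v)-entry 1. The E z commute, and an element h commuting with all of
   them with zero diagonal vanishes: its preimage under phi commutes with
   every e_zz, hence is diagonal, and phi preserves diagonals. Applied to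
   E z E w - [z == w] E z this makes the E z orthogonal idempotents, so
   beta (x, y) := E y (x, y) has inverse (x, y) |-> E x (x, y) and
   E z = beta e_zz beta^-1. Conjugating phi e_uv back by beta gives an
   element of weight [z == u] - [z == v] under every ad e_zz, i.e. a multiple
   of e_uv, and the multiple is 1. Conversely, conjugation by beta with unit
   diagonal maps e_uv to e_uv plus terms on strictly longer intervals, so its
   tilde is the identity. *)

Section IncidenceAlgebra.
Variables (d : Order.disp_t) (X : finPOrderType d) (K : fieldType).
Implicit Types (f g h : IFun X K) (a : K) (u v w x y z : X) (s : seq X).

(** * Convolution and the basis e_uv *)

(* [K] is not canonically a [K]-module, so [{ffun _ -> K}] has no [*:]. *)
Definition scalef a f : IFun X K := [ffun p => a * f p].

Lemma scalefE a f p : scalef a f p = a * f p.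
Proof. exact: ffunE. Qed.

Lemma scale1f f : scalef 1 f = f.
Proof. by apply/ffunP => p; rewrite ffunE mul1r. Qed.

Lemma scale0f f : scalef 0 f = 0.
Proof. by apply/ffunP => p; rewrite !ffunE mul0r. Qed.

Lemma subfE f g p : (f - g) p = f p - g p.
Proof. by rewrite !ffunE. Qed.

Lemma lincombE a f g : [ffun p => a * f p + g p] = scalef a f + g.
Proof. by apply/ffunP => p; rewrite !ffunE. Qed.

Lemma incid0 : incid (0 : IFun X K).
Proof. by move=> x y _; rewrite ffunE. Qed.

Lemma incidD f g : incid f -> incid g -> incid (f + g).
Proof. by move=> hf hg x y xy; rewrite ffunE hf // hg // addr0. Qed.

Lemma incidN f : incid f -> incid (- f).
Proof. by move=> hf x y xy; rewrite ffunE hf // oppr0. Qed.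

Lemma incidB f g : incid f -> incid g -> incid (f - g).
Proof. by move=> hf hg; apply: incidD (incidN hg). Qed.

Lemma incidZ a f : incid f -> incid (scalef a f).
Proof. by move=> hf x y xy; rewrite ffunE hf // mulr0. Qed.

Lemma incid_lincomb a f g : incid f -> incid g -> incid [ffun p => a * f p + g p].
Proof. by move=> hf hg; rewrite lincombE; apply/incidD/hg/incidZ. Qed.

Lemma incid_sum (I : Type) (r : seq I) (P : pred I) (F : I -> IFun X K) :
  (forall i, P i -> incid (F i)) -> incid (\sum_(i <- r | P i) F i).
Proof.
by move=> hF; elim/big_ind: _ => //; [exact: incid0 | exact: incidD].
Qed.

Lemma incid_eI u v : (u <= v)%O -> incid (eI K u v).
Proof.
by move=> uv x y xy; rewrite ffunE; case: eqP => // -[-> ->] in xy *; rewrite uv in xy.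
Qed.

Lemma incid_conv f g : incid (conv f g).
Proof.
move=> x y xy; rewrite ffunE big_pred0 // => t /=.
by apply/negbTE; apply: contra xy => /andP[]; apply: le_trans.
Qed.

Lemma incid_lie f g : incid (lie f g).
Proof. exact/incidB/incid_conv/incid_conv. Qed.

(* No incidence hypotheses: both sides sum over the chains [x <= w <= t <= y]. *)
Lemma convA f g h : conv f (conv g h) = conv (conv f g) h.
Proof.
apply/ffunP => -[x y]; rewrite !ffunE /=.
under eq_bigr do rewrite ffunE big_distrr /=.
rewrite (exchange_big_dep (fun w => leI x w && leI w y)) /=; last first.
  by move=> t w /andP[xt _] /andP[tw ->]; rewrite /leI (le_trans xt tw).
apply: eq_bigr => w /andP[_ wy]; rewrite ffunE big_distrl /=.
apply: eq_big => [t|t _]; last by rewrite mulrA.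
rewrite wy !andbT; case tw: (leI t w); rewrite ?andbF //=.
by rewrite /leI (le_trans tw wy) andbT.
Qed.

Lemma conv_incidE f g p : incid f -> incid g ->
  conv f g p = \sum_t f (p.1, t) * g (t, p.2).
Proof.
move=> hf hg; rewrite ffunE [RHS](bigID (fun t => leI p.1 t && leI t p.2)) /=.
rewrite [X in _ = _ + X]big1 ?addr0 // => t /nandP[xt|ty].
  by rewrite hf // mul0r.
by rewrite hg // mulr0.
Qed.

Lemma incid_idI : incid (idI X K).
Proof. by move=> x y /negbTE xy; rewrite ffunE /=; case: eqP xy => // ->; rewrite lexx. Qed.

Lemma conv1f f : incid f -> conv (idI X K) f = f.
Proof.
move=> hf; apply/ffunP => -[x y]; rewrite conv_incidE //=; last exact: incid_idI.
rewrite (bigD1 x) //= ffunE eqxx mul1r big1 ?addr0 // => t tx.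
by rewrite ffunE eq_sym (negbTE tx) mul0r.
Qed.

Lemma convf1 f : incid f -> conv f (idI X K) = f.
Proof.
move=> hf; apply/ffunP => -[x y]; rewrite conv_incidE //=; last exact: incid_idI.
rewrite (bigD1 y) //= ffunE eqxx mulr1 big1 ?addr0 // => t ty.
by rewrite ffunE (negbTE ty) mulr0.
Qed.

Lemma convDl f g h : conv (f + g) h = conv f h + conv g h.
Proof.
by apply/ffunP => p; rewrite !ffunE -big_split; apply: eq_bigr => t _; rewrite ffunE mulrDl.
Qed.

Lemma convDr f g h : conv f (g + h) = conv f g + conv f h.
Proof.
by apply/ffunP => p; rewrite !ffunE -big_split; apply: eq_bigr => t _; rewrite ffunE mulrDr.
Qed.

Lemma convNl f g : conv (- f) g = - conv f g.
Proof.
by apply/ffunP => p; rewrite !ffunE -sumrN; apply: eq_bigr => t _; rewrite ffunE mulNr.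
Qed.

Lemma convNr f g : conv f (- g) = - conv f g.
Proof.
by apply/ffunP => p; rewrite !ffunE -sumrN; apply: eq_bigr => t _; rewrite ffunE mulrN.
Qed.

Lemma convBl f g h : conv (f - g) h = conv f h - conv g h.
Proof. by rewrite convDl convNl. Qed.

Lemma convBr f g h : conv f (g - h) = conv f g - conv f h.
Proof. by rewrite convDr convNr. Qed.

Lemma convZl a f g : conv (scalef a f) g = scalef a (conv f g).
Proof.
by apply/ffunP => p; rewrite !ffunE big_distrr; apply: eq_bigr => t _; rewrite ffunE -mulrA.
Qed.

Lemma convZr a f g : conv f (scalef a g) = scalef a (conv f g).
Proof.
apply/ffunP => p; rewrite !ffunE big_distrr; apply: eq_bigr => t _.
by rewrite ffunE mulrCA.
Qed.

Lemma conv_diag f g x : conv f g (x, x) = f (x, x) * g (x, x).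
Proof.
rewrite ffunE (eq_bigl (pred1 x)) ?big_pred1_eq // => t.
by rewrite /leI /= andbC -eq_le.
Qed.

Lemma conv_eI_l u v f x y : (u <= v)%O -> incid f ->
  conv (eI K u v) f (x, y) = if x == u then f (v, y) else 0.
Proof.
move=> uv hf; rewrite conv_incidE //=; last exact: incid_eI.
rewrite (bigD1 v) //= big1 ?addr0 => [|t tv].
  by rewrite ffunE xpair_eqE eqxx andbT; case: eqP; rewrite ?mul1r ?mul0r.
by rewrite ffunE xpair_eqE (negbTE tv) andbF mul0r.
Qed.

Lemma conv_eI_r u v f x y : (u <= v)%O -> incid f ->
  conv f (eI K u v) (x, y) = if y == v then f (x, u) else 0.
Proof.
move=> uv hf; rewrite conv_incidE //=; last exact: incid_eI.
rewrite (bigD1 u) //= big1 ?addr0 => [|t tu]; last by rewrite ffunE xpair_eqE (negbTE tu) mulr0.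
by rewrite ffunE xpair_eqE eqxx; case: eqP; rewrite ?mulr1 ?mulr0.
Qed.

Lemma lie_eI_diag z h : incid h ->
  lie (eI K z z) h = [ffun p => ((z == p.1)%:R - (z == p.2)%:R) * h p].
Proof.
move=> hh; apply/ffunP => -[x y]; rewrite subfE conv_eI_l ?conv_eI_r //= ffunE mulrBl.
by rewrite ![z == _]eq_sym; do 2 case: eqP => [->|_]; rewrite ?mul1r ?mul0r.
Qed.

Lemma lie_eI_diag_eI z u v : (u <= v)%O ->
  lie (eI K z z) (eI K u v) = scalef ((z == u)%:R - (z == v)%:R) (eI K u v).
Proof.
move=> uv; apply/ffunP => p; rewrite (lie_eI_diag _ (incid_eI uv)) ffunE scalefE [eI _ _ _ _]ffunE.
by case: (eqVneq p (u, v)) => [->|_]; rewrite ?mulr0.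
Qed.

Lemma conv_commuteM f g h : conv f g = conv g f -> conv f h = conv h f ->
  conv f (conv g h) = conv (conv g h) f.
Proof. by move=> fg fh; rewrite convA fg -convA fh convA. Qed.

Lemma conv_commuteB f g h : conv f g = conv g f -> conv f h = conv h f ->
  conv f (g - h) = conv (g - h) f.
Proof. by move=> fg fh; rewrite convBr convBl fg fh. Qed.

(* Under [ad e_zz] the (a, b)-entry has weight [z == a] - [z == b]. Only (u, v)
   has the weight of e_uv, except (v, u) in characteristic 2, which is not an
   interval. *)
Lemma eI_eigen u v h : (u <= v)%O -> u != v -> incid h ->
  (forall z, lie (eI K z z) h = scalef ((z == u)%:R - (z == v)%:R) h) ->
  h = scalef (h (u, v)) (eI K u v).
Proof.
move=> uv nuv hh eig; apply/ffunP => -[a b]; rewrite scalefE ffunE.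
case: (eqVneq (a, b) (u, v)) => [[-> ->]|nab]; first by rewrite mulr1.
rewrite mulr0.
have coef z : ((z == a)%:R - (z == b)%:R - ((z == u)%:R - (z == v)%:R)) * h (a, b) = 0.
  have /ffunP/(_ (a, b)) := eig z; rewrite lie_eI_diag // ffunE scalefE /= => e.
  by rewrite mulrBl e subrr.
have nvu : v != u by rewrite eq_sym.
case: (eqVneq a u) => [eau|nau].
  have nbv : b != v by apply: contraNneq nab => ->; rewrite eau.
  have := coef v; rewrite eau eqxx (negbTE nvu) [v == b]eq_sym (negbTE nbv) /=.
  by rewrite !mulr0n mulr1n !subr0 !sub0r opprK mul1r.
case: (eqVneq b u) => [ebu|nbu]; last first.
  have := coef u; rewrite eqxx [u == a]eq_sym (negbTE nau) [u == b]eq_sym (negbTE nbu) /=.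
  rewrite (negbTE nuv) !mulr0n mulr1n !subr0 !sub0r mulN1r.
  by move/eqP; rewrite oppr_eq0 => /eqP.
case: (eqVneq a v) => [eav|nav].
  rewrite eav ebu hh //; apply/negP => vu; by move: nuv; rewrite eq_le uv vu.
have := coef v; rewrite eqxx [v == a]eq_sym (negbTE nav) ebu (negbTE nvu) /=.
by rewrite !mulr0n mulr1n !subr0 !sub0r opprK mul1r.
Qed.

Definition incid_mx f : 'M[K]_#|X| := \matrix_(i, j) f (enum_val i, enum_val j).

Lemma incid_mx_inj : injective incid_mx.
Proof.
move=> f g /matrixP fg; apply/ffunP => -[x y].
by have := fg (enum_rank x) (enum_rank y); rewrite !mxE !enum_rankK.
Qed.

Lemma incid_mx_conv f g : incid f -> incid g ->
  incid_mx (conv f g) = incid_mx f *m incid_mx g.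
Proof.
move=> hf hg; apply/matrixP => i j; rewrite !mxE conv_incidE //=.
rewrite (reindex (@enum_val X (mem predT))) /=; last first.
  by apply: onW_bij; exists enum_rank => t; rewrite ?enum_valK ?enum_rankK.
by apply: eq_bigr => k _; rewrite !mxE.
Qed.

Lemma incid_mx_idI : incid_mx (idI X K) = 1%:M.
Proof. by apply/matrixP => i j; rewrite !mxE ffunE /= (inj_eq enum_val_inj); case: eqP. Qed.

Lemma conv_inverse_sym f g : incid f -> incid g ->
  conv g f = idI X K -> conv f g = idI X K.
Proof.
move=> hf hg gf; apply: incid_mx_inj; rewrite incid_mx_conv // incid_mx_idI.
by apply: mulmx1C; rewrite -incid_mx_conv // gf incid_mx_idI.
Qed.

Lemma incid_expand f : incid f ->
  f = \sum_(p | leI p.1 p.2) scalef (f p) (eI K p.1 p.2).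
Proof.
move=> hf; apply/ffunP => q; rewrite sum_ffunE.
under eq_bigr do rewrite !ffunE -surjective_pairing.
case: (boolP (leI q.1 q.2)) => hq.
  rewrite (bigD1 q) //= eqxx mulr1 big1 ?addr0 // => p /andP[_ /negbTE pq].
  by rewrite eq_sym pq mulr0.
rewrite big1 => [|p hp]; first by case: q hq => x y /= /hf.
by case: eqP => [qp|]; [rewrite qp hp in hq | rewrite mulr0].
Qed.

Definition incid_linear (F : IFun X K -> IFun X K) : Prop :=
  forall a f g, incid f -> incid g ->
    F [ffun p => a * f p + g p] = [ffun p => a * F f p + F g p].

Section IncidLinear.
Variable F : IFun X K -> IFun X K.
Hypothesis linF : incid_linear F.

Lemma incid_linear0 : F 0 = 0.
Proof.
have := linF 1 incid0 incid0; rewrite !lincombE !scale1f addr0 => F00.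
by apply: (@addrI _ (F 0)); rewrite addr0 -F00.
Qed.

Lemma incid_linearD f g : incid f -> incid g -> F (f + g) = F f + F g.
Proof. by move=> hf hg; have := linF 1 hf hg; rewrite !lincombE !scale1f. Qed.

Lemma incid_linearZ a f : incid f -> F (scalef a f) = scalef a (F f).
Proof.
by move=> hf; have := linF a hf incid0; rewrite !lincombE incid_linear0 !addr0.
Qed.

Lemma incid_linear_sum (I : Type) (r : seq I) (P : pred I) (c : I -> K) G :
  (forall i, P i -> incid (G i)) ->
  F (\sum_(i <- r | P i) scalef (c i) (G i)) = \sum_(i <- r | P i) scalef (c i) (F (G i)).
Proof.
move=> hG; elim: r => [|i r IH]; first by rewrite !big_nil incid_linear0.
rewrite !big_cons; case: ifP => Pi //; have hGi := hG i Pi.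
have hS : incid (\sum_(j <- r | P j) scalef (c j) (G j)).
  by apply: incid_sum => j Pj; apply/incidZ/hG.
by rewrite incid_linearD ?incid_linearZ ?IH //; apply: incidZ.
Qed.

End IncidLinear.

Lemma incid_linear_eq F G : incid_linear F -> incid_linear G ->
  (forall u v, (u <= v)%O -> F (eI K u v) = G (eI K u v)) ->
  forall f, incid f -> F f = G f.
Proof.
move=> linF linG FG f hf; rewrite (incid_expand hf).
have hE (p : X * X) : leI p.1 p.2 -> incid (eI K p.1 p.2) by apply: incid_eI.
by rewrite !incid_linear_sum //; apply: eq_bigr => p hp; rewrite FG.
Qed.

(** * Interval lengths and tilde *)

Lemma size_lt_path x s : path <%O x s -> (size s < #|X|.+1)%N.
Proof.
move=> xs; have /card_uniqP us := @lt_sorted_uniq _ _ (x :: s) xs.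
rewrite ltnS ltnW // -[(size s).+1]/(size (x :: s)) -us; exact: max_card.
Qed.

Lemma ilen_ge x y s : path <%O x s -> last x s = y -> (size s <= ilen x y)%N.
Proof.
move=> xs sy; apply: (leq_bigmax_cond (Ordinal (size_lt_path xs))).
by apply/existsP; exists (in_tuple s); rewrite /= xs sy eqxx.
Qed.

Lemma ilen_chain x y : (x <= y)%O ->
  exists2 s : seq X, path <%O x s & last x s = y /\ size s = ilen x y.
Proof.
move=> xy; have [s0 xs0 s0y] : exists2 s : seq X, path <%O x s & last x s = y.
  case: (eqVneq x y) => [<-|nxy]; first by exists [::].
  by exists [:: y]; rewrite //= andbT lt_neqAle nxy.
pose n0 := Ordinal (size_lt_path xs0).
have P0 : [exists t : n0.-tuple X, path <%O x t && (last x t == y)].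
  by apply/existsP; exists (in_tuple s0); rewrite /= xs0 s0y eqxx.
rewrite /ilen (bigmax_eq_arg n0) //.
case: arg_maxnP => //= n /existsP[t /andP[xt /eqP ty]] _.
by exists t; rewrite ?size_tuple.
Qed.

Lemma ilen_diag x : ilen x x = 0%N.
Proof.
apply/eqP; rewrite -leqn0; apply/bigmax_leqP => n /existsP[t /andP[xt /eqP tx]].
rewrite -(size_tuple t); case: (tval t) xt tx => [|y s] // xys /= ysx.
have /allP/(_ _ (mem_last y s)) := lt_path_min xys.
by rewrite ysx ltxx.
Qed.

Lemma ilen_lt u x y v : (u <= x)%O -> (x <= y)%O -> (y <= v)%O -> (x, y) != (u, v) ->
  (ilen x y < ilen u v)%N.
Proof.
move=> ux xy yv nxy; have [s xs [sy <-]] := ilen_chain xy.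
pose s' := (if u == x then [::] else [:: x]) ++ s ++ (if y == v then [::] else [:: v]).
have [us' s'v] : path <%O u s' /\ last u s' = v.
  split; last first.
    rewrite /s' !last_cat.
    by case: (eqVneq u x) => [->|_] /=; rewrite sy; case: (eqVneq y v).
  rewrite /s' !cat_path; apply/and3P; split.
  - by case: (eqVneq u x) => //= nux; rewrite andbT lt_neqAle nux.
  - by case: (eqVneq u x) => [->|].
  case: (eqVneq u x) => [->|_] /=; rewrite sy;
    by case: (eqVneq y v) => //= nyv; rewrite andbT lt_neqAle nyv.
apply: leq_trans (ilen_ge us' s'v).
rewrite /s' !size_cat; move: nxy.
case: (eqVneq u x) => [->|_]; case: (eqVneq y v) => [->|_]; rewrite ?eqxx //=.
all: by rewrite ?addn0 ?addn1 ?add1n // ltnS leqnSn.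
Qed.

Lemma tilde_idP phi :
  (forall f, incid f -> tilde phi f = f) <->
  (forall u v, (u <= v)%O -> compL (ilen u v) (phi (eI K u v)) = eI K u v).
Proof.
split=> [tid u v uv | hc f hf].
  rewrite -[RHS](tid _ (incid_eI uv)); apply/ffunP => q; rewrite [RHS]ffunE.
  rewrite (bigD1 (u, v)) //= big1 ?addr0 => [|p /andP[_ /negbTE pq]].
    by rewrite [eI _ _ _ _]ffunE eqxx mul1r.
  by rewrite [eI _ _ _ _]ffunE pq mul0r.
apply/ffunP => q; rewrite {2}(incid_expand hf) sum_ffunE ffunE.
by apply: eq_bigr => p hp; rewrite hc // scalefE.
Qed.

(** * Inner automorphisms *)

Lemma LAut_congr F G : (forall f, incid f -> F f = G f) -> LAut F -> LAut G.
Proof.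
move=> FG [Finc Flin Finj Fsurj Flie]; split=> [f hf | a f g hf hg | f g hf hg | g hg | f g hf hg].
- by rewrite -FG //; apply: Finc.
- by have hfg := incid_lincomb a hf hg; rewrite -!FG //; apply: Flin.
- by rewrite -!FG //; apply: Finj.
- by have [f hf Ffg] := Fsurj g hg; exists f; rewrite -?FG.
- by have hfg := incid_lie f g; rewrite -!FG //; apply: Flie.
Qed.

Definition conjI b c f : IFun X K := conv (conv b f) c.

Section Conjugation.
Variables b c : IFun X K.
Hypotheses (hb : incid b) (hc : incid c) (cb : conv c b = idI X K).

Lemma incid_conjI f : incid (conjI b c f).
Proof. exact: incid_conv. Qed.

Lemma conjI_lincomb a f g :
  conjI b c [ffun p => a * f p + g p] = [ffun p => a * conjI b c f p + conjI b c g p].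
Proof. by rewrite !lincombE /conjI convDr convDl convZr convZl. Qed.

Lemma conjIZ a f : conjI b c (scalef a f) = scalef a (conjI b c f).
Proof. by rewrite /conjI convZr convZl. Qed.

Lemma conjIK f : incid f -> conjI c b (conjI b c f) = f.
Proof.
by move=> hf; rewrite /conjI (convA c) (convA c b) cb conv1f // -convA cb convf1.
Qed.

Lemma conjI_conv f g : incid g -> conv (conjI b c f) (conjI b c g) = conjI b c (conv f g).
Proof.
by move=> hg; rewrite /conjI -convA (convA c) (convA c b) cb conv1f // !convA.
Qed.

Lemma conjI_lie f g : incid f -> incid g ->
  conjI b c (lie f g) = lie (conjI b c f) (conjI b c g).
Proof. by move=> hf hg; rewrite /lie !conjI_conv // /conjI convBr convBl. Qed.

Lemma conjI_eI u v x y : (u <= v)%O -> conjI b c (eI K u v) (x, y) = b (x, u) * c (v, y).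
Proof.
move=> uv; rewrite conv_incidE //=; last exact: incid_conv.
under eq_bigr do rewrite conv_eI_r //.
by rewrite (bigD1 v) //= eqxx big1 ?addr0 // => t /negbTE ->; rewrite mul0r.
Qed.

End Conjugation.

Lemma LAut_conjI b c : incid b -> incid c ->
  conv b c = idI X K -> conv c b = idI X K -> LAut (conjI b c).
Proof.
move=> hb hc bc cb; split=> [f _ | a f g _ _ | f g hf hg | g hg | f g hf hg].
- exact: incid_conjI.
- exact: conjI_lincomb.
- by move=> /(congr1 (conjI c b)); rewrite !conjIK.
- by exists (conjI c b g); [apply: incid_conjI | rewrite conjIK].
- exact: conjI_lie.
Qed.

Lemma conjI_tilde b c : incid b -> incid c -> (forall x, b (x, x) = 1) ->
  conv b c = idI X K ->
  forall u v, (u <= v)%O -> compL (ilen u v) (conjI b c (eI K u v)) = eI K u v.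
Proof.
move=> hb hc b1 bc u v uv.
have c1 x : c (x, x) = 1 by have := conv_diag b c x; rewrite bc b1 mul1r ffunE eqxx.
apply/ffunP => -[x y]; rewrite [compL _ _ _]ffunE [eI _ _ _ _]ffunE /= conjI_eI //.
case: (eqVneq (x, y) (u, v)) => [[-> ->]|nxy]; first by rewrite /leI uv eqxx b1 c1 mulr1.
case: (boolP (x <= u)%O) => xu; last by rewrite hb // mul0r if_same.
case: (boolP (v <= y)%O) => vy; last by rewrite hc // mulr0 if_same.
by rewrite eq_sym in nxy; rewrite (gtn_eqF (ilen_lt xu uv vy nxy)) andbF.
Qed.

Lemma Inn1_LAut_tilde phi :
  Inn1 phi -> LAut phi /\ (forall f, incid f -> tilde phi f = f).
Proof.
case=> b [c [hb hc b1 [bc cb] phiE]].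
split; first exact: LAut_congr (fun f hf => esym (phiE f hf)) (LAut_conjI hb hc bc cb).
by apply/tilde_idP => u v uv; rewrite phiE; [exact: conjI_tilde | exact: incid_eI].
Qed.

(** * Lie automorphisms with trivial tilde are inner *)

Section TrivialTilde.
Variable phi : IFun X K -> IFun X K.
Hypotheses (phi_incid : forall f, incid f -> incid (phi f)) (phi_lin : incid_linear phi).
Hypothesis phi_inj : forall f g, incid f -> incid g -> phi f = phi g -> f = g.
Hypothesis phi_surj : forall g, incid g -> exists2 f, incid f & phi f = g.
Hypothesis phi_lie : forall f g, incid f -> incid g -> phi (lie f g) = lie (phi f) (phi g).
Hypothesis phi_tilde :
  forall u v, (u <= v)%O -> compL (ilen u v) (phi (eI K u v)) = eI K u v.

Local Notation E z := (phi (eI K z z)).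

Lemma phi_eI_entry u v : (u <= v)%O -> phi (eI K u v) (u, v) = 1.
Proof.
by move=> uv; have /ffunP/(_ (u, v)) := phi_tilde uv; rewrite !ffunE /leI uv !eqxx.
Qed.

Lemma phiE_diag z w : E z (w, w) = (z == w)%:R.
Proof.
have /ffunP/(_ (w, w)) := phi_tilde (lexx z).
rewrite !ffunE /= !ilen_diag /leI lexx eqxx /= => ->.
by rewrite xpair_eqE andbb eq_sym; case: eqP.
Qed.

Lemma incid_phiE z : incid (E z).
Proof. exact/phi_incid/incid_eI. Qed.

Lemma phiE_commute x z : conv (E x) (E z) = conv (E z) (E x).
Proof.
have ex := incid_eI (lexx x); have ez := incid_eI (lexx z).
apply/eqP; rewrite -subr_eq0; apply/eqP; rewrite -/(lie _ _) -phi_lie //.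
by rewrite lie_eI_diag_eI // subrr incid_linearZ // scale0f.
Qed.

Lemma phiE_centralizer_eq0 h : incid h -> (forall z, conv (E z) h = conv h (E z)) ->
  (forall w, h (w, w) = 0) -> h = 0.
Proof.
move=> hh hcomm hdiag; have [k hk phik] := phi_surj hh.
have k_offdiag x y : x != y -> k (x, y) = 0.
  move=> nxy; have ex := incid_eI (lexx x).
  have : lie (eI K x x) k = 0.
    apply: phi_inj; [exact: incid_lie | exact: incid0 |].
    by rewrite phi_lie // phik /lie hcomm subrr incid_linear0.
  move=> /ffunP/(_ (x, y)); rewrite lie_eI_diag // !ffunE /= eqxx (negbTE nxy).
  by rewrite subr0 mul1r.
have k_diag w : k (w, w) = h (w, w).
  have eI_incid (p : X * X) : leI p.1 p.2 -> incid (eI K p.1 p.2) by apply: incid_eI.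
  rewrite -phik {2}(incid_expand hk) incid_linear_sum // sum_ffunE.
  rewrite (bigD1 (w, w)) /=; last by rewrite /leI lexx.
  rewrite scalefE phiE_diag eqxx mulr1 big1 ?addr0 // => -[x y] /= /andP[_ nxy].
  rewrite scalefE; case: (eqVneq x y) nxy => [<- nxx|/k_offdiag -> _]; last by rewrite mul0r.
  rewrite phiE_diag; case: (eqVneq x w) nxx => [->|_ _]; first by rewrite eqxx.
  by rewrite /= mulr0n mulr0.
have k0 : k = 0.
  apply/ffunP => -[x y]; rewrite ffunE.
  by case: (eqVneq x y) => [<-|/k_offdiag //]; rewrite k_diag hdiag.
by rewrite -phik k0 incid_linear0.
Qed.

Lemma phiE_idem z : conv (E z) (E z) = E z.
Proof.
apply/eqP; rewrite -subr_eq0; apply/eqP; apply: phiE_centralizer_eq0.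
- by apply: incidB; [exact: incid_conv | exact: incid_phiE].
- by move=> x; apply: conv_commuteB; [apply: conv_commuteM|]; apply: phiE_commute.
- by move=> w; rewrite subfE conv_diag phiE_diag; case: (z == w); rewrite ?mulr1 ?mulr0 subrr.
Qed.

Lemma phiE_orth z w : z != w -> conv (E z) (E w) = 0.
Proof.
move=> nzw; apply: phiE_centralizer_eq0; first exact: incid_conv.
  by move=> x; apply: conv_commuteM; apply: phiE_commute.
move=> y; rewrite conv_diag !phiE_diag.
case: (eqVneq z y) nzw => [->|_ _]; last by rewrite mul0r.
by rewrite eq_sym => /negbTE ->; rewrite mulr0.
Qed.

Definition beta : IFun X K := [ffun p => E p.2 p].
Definition beta_inv : IFun X K := [ffun p => E p.1 p].

Lemma incid_beta : incid beta.
Proof. by move=> x y xy; rewrite ffunE incid_phiE. Qed.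

Lemma incid_beta_inv : incid beta_inv.
Proof. by move=> x y xy; rewrite ffunE incid_phiE. Qed.

Lemma beta_diag x : beta (x, x) = 1.
Proof. by rewrite ffunE phiE_diag eqxx. Qed.

Lemma beta_inv_diag x : beta_inv (x, x) = 1.
Proof. by rewrite ffunE phiE_diag eqxx. Qed.

Lemma conv_beta_inv_beta : conv beta_inv beta = idI X K.
Proof.
apply/ffunP => -[u v]; transitivity (conv (E u) (E v) (u, v)).
  by rewrite !ffunE; apply: eq_bigr => t _; rewrite !ffunE.
rewrite [idI _ _ _]ffunE /=; case: (eqVneq u v) => [<-|/phiE_orth ->]; last by rewrite ffunE.
by rewrite phiE_idem phiE_diag eqxx.
Qed.

Lemma conv_beta_beta_inv : conv beta beta_inv = idI X K.
Proof. exact: conv_inverse_sym incid_beta incid_beta_inv conv_beta_inv_beta. Qed.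

Lemma phiE_beta x : conv (E x) beta = conv beta (eI K x x).
Proof.
apply/ffunP => -[u v]; rewrite conv_eI_r //; last exact: incid_beta.
transitivity (conv (E x) (E v) (u, v)).
  by rewrite !ffunE; apply: eq_bigr => t _; rewrite !ffunE.
case: (eqVneq v x) => [->|nvx]; first by rewrite phiE_idem ffunE.
by rewrite phiE_orth ?ffunE // eq_sym.
Qed.

Lemma phiE_conj x : E x = conjI beta beta_inv (eI K x x).
Proof. by rewrite /conjI -phiE_beta -convA conv_beta_beta_inv convf1 //; exact: incid_phiE. Qed.

Lemma phi_eI_conj u v : (u <= v)%O -> phi (eI K u v) = conjI beta beta_inv (eI K u v).
Proof.
move=> uv; case: (eqVneq u v) => [<-|nuv]; first exact: phiE_conj.
have huv := incid_eI uv.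
pose psi := conjI beta_inv beta (phi (eI K u v)).
have phi_psi : phi (eI K u v) = conjI beta beta_inv psi.
  by rewrite conjIK //; [exact: conv_beta_beta_inv | exact: phi_incid].
have psi_eigen z : lie (eI K z z) psi = scalef ((z == u)%:R - (z == v)%:R) psi.
  have ez := incid_eI (lexx z).
  rewrite -[eI K z z](conjIK conv_beta_inv_beta ez) -phiE_conj.
  rewrite -conjI_lie; [|exact: conv_beta_beta_inv | exact: incid_phiE | exact: phi_incid].
  by rewrite -phi_lie // lie_eI_diag_eI // incid_linearZ // conjIZ.
have hpsi : incid psi := incid_conjI _ _ _.
clearbody psi; have psi_scal := eI_eigen uv nuv hpsi psi_eigen.
have := phi_eI_entry uv.
rewrite phi_psi psi_scal conjIZ scalefE (conjI_eI incid_beta incid_beta_inv _ _ uv).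
by rewrite beta_diag beta_inv_diag !mulr1 => ->; rewrite scale1f.
Qed.

Lemma LAut_tilde_Inn1 : Inn1 phi.
Proof.
exists beta, beta_inv; split; [exact: incid_beta | exact: incid_beta_inv | exact: beta_diag | |].
  by split; [exact: conv_beta_beta_inv | exact: conv_beta_inv_beta].
exact: incid_linear_eq phi_lin (fun a f g _ _ => conjI_lincomb beta beta_inv a f g) phi_eI_conj.
Qed.

End TrivialTilde.

End IncidenceAlgebra.

Theorem proposition4p14 (d : Order.disp_t) (X : finPOrderType d) (K : fieldType) :
  connected_poset X ->
  forall phi : IFun X K -> IFun X K,
    (LAut phi /\ (forall f : IFun X K, incid f -> tilde phi f = f)) <-> Inn1 phi.
Proof.
move=> _ phi; split; last exact: Inn1_LAut_tilde.
by case=> -[phi_incid phi_lin phi_inj phi_surj phi_lie] /tilde_idP; apply: LAut_tilde_Inn1.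
Qed.
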